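(* Let $G$ be a finite primitive monolithic soluble group, let $N=\operatorname{soc}(G)$ and let $H$ be a core-free maximal subgroup of $G$. Given $1\neq h\in H$ and $n\in N$, we have $hn\in V(G)$ if and only if $h\in V(H)$.
   Context: For a finite group $X$, $V(X)$ is the set of elements $x\in X$ such that $X=\langle x,y\rangle$ for some $y\in X$. A primitive monolithic group is one having a core-free maximal subgroup and a unique minimal normal subgroup. *)

From mathcomp Require Import all_boot all_fingroup all_solvable.
Set Implicit Arguments. Unset Strict Implicit. Unset Printing Implicit Defensive.
Local Open Scope group_scope.

Definition minnormal_sub (gT : finGroupType) (M G : {set gT}) : bool :=
  minnormal M G && (M \subset G).

Definition soc (gT : finGroupType) (G : {set gT}) : {set gT} :=
  << \bigcup_(M : {group gT} | minnormal_sub M G) M >>.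

Definition core_free (gT : finGroupType) (H G : {set gT}) : bool :=
  (H \subset G) && (gcore H G == 1).

Definition primitive_monolithic (gT : finGroupType) (G : {group gT}) : Prop :=
  (exists H : {group gT}, maximal H G /\ core_free H G) /\
  (exists N : {group gT}, minnormal_sub N G /\
     forall M : {group gT}, minnormal_sub M G -> M = N).

Definition Vgen (gT : finGroupType) (X : {set gT}) : {set gT} :=
  [set x in X | [exists y in X, << [set x; y] >> == X]].

From mathcomp Require Import all_boot all_fingroup all_solvable.
Set Implicit Arguments. Unset Strict Implicit. Unset Printing Implicit Defensive.
Local Open Scope group_scope.

(* G = N H with N = soc G abelian, H :&: N = 1 and 'C_H(N) = 1. If <hn, y> = G then, writing
   y = m z with m in N and z in H, Dedekind's law gives <h, z> = H. Conversely let <h, k> = H.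
   For b in N the subgroup <hn, kb> supplements N, so it is G or a complement to N, and every
   complement is an N-conjugate of H (Schur-Zassenhaus in N A, for A minimal normal in H, whose
   normaliser is H). If no b worked, b |-> (an m with hn, kb in H^m) would be injective on N;
   but hn in H^m forces hn = h^m, so these m lie in a coset of the proper subgroup 'C_N[h]. *)

Section PrimitiveAbelianSocle.

Variables (gT : finGroupType) (G H N : {group gT}).
Hypotheses (minN : minnormal N G) (sNG : N \subset G) (abN : abelian N).
Hypotheses (maxH : maximal H G) (cfH : gcore H G = 1).

Let sHG : H \subset G := proper_sub (maxgroupp maxH).
Let ntN : N :!=: 1. Proof. by case/andP: (mingroupp minN). Qed.
Let nNG : G \subset 'N(N). Proof. by case/andP: (mingroupp minN). Qed.
Let nNH : H \subset 'N(N) := subset_trans sHG nNG.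
Let mem_mul_maximal_minnormal h n : h \in H -> n \in N -> h * n \in G.
Proof. by move=> Hh Nn; apply: groupM; [apply: (subsetP sHG) | apply: (subsetP sNG)]. Qed.

Lemma core_free_normal_trivg (X : {group gT}) :
  X \subset H -> G \subset 'N(X) -> X :=: 1.
Proof. by move=> sXH nXG; apply/trivgP; rewrite -cfH gcore_max. Qed.

Lemma mul_minnormal_maximal : N * H = G.
Proof.
have nsNH : ~~ (N \subset H).
  by apply: contra ntN => sNH; apply/eqP; apply: core_free_normal_trivg.
rewrite -norm_joinEr //; apply/eqP; rewrite eqEproper join_subG sNG sHG /=.
apply: contra nsNH => /(maxgroupP maxH).2 /(_ (joing_subr N H)) <-.
exact: joing_subl.
Qed.

Lemma norms_minnormal_maximal (X : {set gT}) :
  H \subset 'N(X) -> N \subset 'N(X) -> G \subset 'N(X).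
Proof. by move=> nXH nXN; rewrite -mul_minnormal_maximal mul_subG. Qed.

Lemma maximal_minnormal_TI : H :&: N = 1.
Proof.
apply: core_free_normal_trivg; first exact: subsetIl.
rewrite norms_minnormal_maximal //; first by rewrite normsI ?normG.
by rewrite cents_norm // centsC (subset_trans (subsetIr H N) abN).
Qed.

Lemma maximal_cent_minnormal : 'C_H(N) = 1.
Proof.
apply: core_free_normal_trivg; first exact: subsetIl.
rewrite norms_minnormal_maximal //; first by rewrite normsI ?normG ?norms_cent.
by rewrite cents_norm // centsC subsetIr.
Qed.

Lemma normal_sub_minnormal (M : {group gT}) :
  M \subset N -> G \subset 'N(M) -> M :=: 1 \/ M :=: N.
Proof.
move=> sMN nMG; have [-> | ntM] := eqVneq M 1%G; [by left | right].
by apply: (mingroupP minN).2 => //; rewrite ntM.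
Qed.

Lemma supplement_minnormal_TI_or_sub (X : {group gT}) :
  N * X = G -> X :&: N = 1 \/ N \subset X.
Proof.
move=> defG; have nXN_G : G \subset 'N(X :&: N).
  rewrite -{1}defG mul_subG //; last first.
    by rewrite normsI ?normG // (subset_trans _ nNG) // -defG mulG_subr.
  by rewrite cents_norm // centsC (subset_trans (subsetIr X N) abN).
case: (normal_sub_minnormal (subsetIr X N) nXN_G) => [-> | <-]; first by left.
by right; apply: subsetIl.
Qed.

Lemma norm_normal_maximal (A : {group gT}) : A <| H -> A :!=: 1 -> 'N_G(A) = H.
Proof.
case/andP=> sAH nAH ntA; have sHNA : H \subset 'N_G(A) by rewrite subsetI sHG.
have [NGA | neNG] := eqVneq 'N_G(A) G; last first.
  by apply: (maxgroupP maxH).2 sHNA; rewrite properEneq neNG subsetIl.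
have nAN : N \subset 'N(A) by rewrite (subset_trans sNG) // -NGA subsetIr.
have cNA : [~: N, A] = 1.
  apply/trivgP; rewrite -maximal_minnormal_TI setIC.
  apply: subset_trans (setIS N sAH).
  by rewrite commg_subI // subsetI subxx // (subset_trans sAH nNH).
case/negP: ntA; rewrite -subG1 -maximal_cent_minnormal subsetI sAH centsC.
exact/commG1P.
Qed.

Lemma normal_join_minnormal (A : {group gT}) : A <| H -> N <*> A <| G.
Proof.
case/andP=> sAH nAH; rewrite /normal join_subG sNG (subset_trans sAH sHG) /=.
rewrite norms_minnormal_maximal ?(subset_trans (joing_subl N A) (normG _)) //.
by rewrite norm_joinEr ?normsM ?(subset_trans sAH nNH).
Qed.

Lemma conj_maximal_TI m : m \in N -> H :^ m :&: N = 1.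
Proof. by move=> Nm; rewrite -{1}(conjGid Nm) -conjIg maximal_minnormal_TI conjs1g. Qed.

Lemma mul_mem_conj_maximal h n m :
  h \in H -> n \in N -> m \in N -> h * n \in H :^ m -> h * n = h ^ m.
Proof.
move=> Hh Nn Nm; rewrite mem_conjg => Hhn_m.
have Ghn := mem_mul_maximal_minnormal Hh Nn.
have : h^-1 * (h * n) ^ m^-1 \in H :&: N.
  rewrite inE groupM ?groupV //= conjg_mulR mulgA mulKg groupM //.
  by rewrite (subsetP (_ : [~: G, N] \subset N)) ?commg_subr ?mem_commg ?groupV.
rewrite maximal_minnormal_TI => /set1P/eqP; rewrite -eq_mulVg1 => /eqP hE.
by rewrite {2}hE conjgKV.
Qed.

Lemma card_conj_maximal_mul_lt h n :
  h \in H -> h != 1 -> n \in N -> #|[set m in N | h * n \in H :^ m]| < #|N|.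
Proof.
move=> Hh nth Nn; set S := [set m in N | _].
have [S0 | [m0 Sm0]] := set_0Vmem S; first by rewrite S0 cards0 cardG_gt0.
have prC : 'C_N[h] \proper N.
  rewrite properE subsetIl /=; apply: contra nth => sNC.
  have : h \in 'C_H(N) by rewrite inE Hh -sub_cent1 (subset_trans sNC) ?subsetIr.
  by rewrite maximal_cent_minnormal => /set1P ->.
apply: leq_ltn_trans (proper_card prC); rewrite -(card_rcoset 'C_N[h] m0) subset_leq_card //.
have hnE m : m \in S -> h * n = h ^ m.
  by rewrite inE => /andP[Nm]; apply: mul_mem_conj_maximal.
have sSN : {subset S <= N} by move=> m; rewrite inE => /andP[].
apply/subsetP=> m Sm; rewrite mem_rcoset inE groupM ?groupV ?sSN //=.
apply/cent1P/esym/commgP/conjg_fixP.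
by rewrite conjgM -(hnE _ Sm) (hnE _ Sm0) conjgK.
Qed.

Lemma conj_maximal_mulr_inj k m b c : m \in N -> b \in N -> c \in N ->
  k * b \in H :^ m -> k * c \in H :^ m -> b = c.
Proof.
move=> Nm Nb Nc Hkb Hkc; have : (k * b)^-1 * (k * c) \in H :^ m :&: N.
  by rewrite inE groupM ?groupV //= invMg -mulgA mulKg groupM ?groupV.
by rewrite conj_maximal_TI // invMg -mulgA mulKg => /set1P/eqP; rewrite -eq_mulVg1 => /eqP.
Qed.

Lemma gen_maximal_of_gen_mul h n y : h \in H -> n \in N -> y \in G ->
  <<[set h * n; y]>> = G -> exists2 z, z \in H & <<[set h; z]>> = H.
Proof.
move=> Hh Nn; rewrite -{1}mul_minnormal_maximal => /mulsgP[m z Nm Hz ->] genG.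
exists z => //; set Y := generated_group [set h; z].
have sYH : Y \subset H by rewrite gen_subG subUset !sub1set Hh.
have nNY : Y \subset 'N(N) := subset_trans sYH nNH.
have sG_NY : G \subset N * Y.
  rewrite -genG -norm_joinEr // gen_subG subUset !sub1set.
  have NJ := subsetP (joing_subl N Y).
  have YJ x : x \in [set h; z] -> x \in N <*> Y.
    by move=> Sx; rewrite (subsetP (joing_subr N Y)) ?mem_gen.
  by rewrite (groupMr _ (NJ n Nn)) (groupMl _ (NJ m Nm)) !YJ // !inE eqxx ?orbT.
apply/eqP; rewrite eqEsubset sYH -(setIidPl (subset_trans sHG sG_NY)).
by rewrite -group_modr // maximal_minnormal_TI mul1g andTb.
Qed.

Hypothesis solG : solvable G.

Lemma coprime_minnormal_maximal (A : {group gT}) :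
  minnormal A H -> A \subset H -> coprime #|N| #|A|.
Proof.
move=> minA sAH; have solH := solvableS sHG solG.
have [_ _ /is_abelemP[p _ /abelem_pgroup pN]] := minnormal_solvable minN sNG solG.
have [nAH ntA /is_abelemP[q _ /abelem_pgroup qA]] := minnormal_solvable minA sAH solH.
have nsAH : A <| H by rewrite /normal sAH nAH.
have [eq_qp | ne_qp] := eqVneq q p; last first.
  by rewrite (pnat_coprime pN) // (pi_pnat qA) // !inE.
(* For q = p, N <*> A is a normal p-subgroup, so [~: N, N <*> A] < N must be trivial. *)
subst q; have nNA : A \subset 'N(N) := subset_trans sAH nNH.
have pNA : p.-group (N <*> A) by rewrite norm_joinEr // pgroupM pN.
have nN_NA : N <*> A \subset 'N_(N <*> A)(N) by rewrite subsetI subxx join_subG normG.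
have prC := nil_comm_properl (pgroup_nil pNA) (joing_subl N A) ntN nN_NA.
have nCG : G \subset 'N([~: N, N <*> A]).
  by rewrite normsR // normal_norm // normal_join_minnormal.
case: (normal_sub_minnormal (proper_sub prC) nCG) => [/commG1P cN_NA | eqC].
  case/negP: ntA; rewrite -subG1 -maximal_cent_minnormal subsetI sAH.
  by rewrite centsC (subset_trans cN_NA) ?centS ?joing_subr.
by rewrite eqC properxx in prC.
Qed.

Lemma compl_minnormal_conj (K : {group gT}) :
  K :&: N = 1 -> N * K = G -> exists2 m, m \in N & K :=: H :^ m.
Proof.
move=> tiKN defG; have sKG : K \subset G by rewrite -defG mulG_subr.
have oK : #|K| = #|H|.
  apply/eqP; rewrite -(eqn_pmul2l (cardG_gt0 N)) -!TI_cardMg; last 2 first.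
  - by rewrite setIC maximal_minnormal_TI.
  - by rewrite setIC tiKN.
  by rewrite defG mul_minnormal_maximal.
have [H1 | ntH] := eqsVneq H 1.
  by exists 1; rewrite ?group1 // conjsg1 H1 card_le1_trivg // oK H1 cards1.
have [A minA sAH] := minnormal_exists ntH (normG H).
have [ntA nAH] := andP (mingroupp minA).
have nNA : A \subset 'N(N) := subset_trans sAH nNH.
have nsAH : A <| H by rewrite /normal sAH nAH.
have nsNA_G := normal_join_minnormal nsAH.
pose K1 := (K :&: (N <*> A))%G.
have defNA : N * K1 = N * A.
  rewrite group_modl ?joing_subl // defG -norm_joinEr //.
  by apply/setIidPr; apply: normal_sub.
have oK1 : #|K1| = #|A|.
  apply/eqP; rewrite -(eqn_pmul2l (cardG_gt0 N)) -!TI_cardMg ?defNA //.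
    by apply/trivgP; rewrite -maximal_minnormal_TI /= (setIC N) setSI.
  by apply/trivgP; rewrite -tiKN setIC setIS // subsetIl.
have sK1_NA : K1 \subset N * A by rewrite -defNA mulG_subr.
have [m Nm defK1] := SchurZassenhaus_trans_sol (abelian_sol abN) nNA sK1_NA
  (coprime_minnormal_maximal minA sAH) oK1.
exists m => //; apply/eqP; rewrite eqEcard cardJg oK leqnn andbT.
rewrite -(norm_normal_maximal nsAH ntA).
rewrite conjIg conjGid ?(subsetP sNG) // -normJ -defK1 subsetI sKG normsI ?normG //.
exact: subset_trans sKG (normal_norm nsNA_G).
Qed.

Lemma gen_mul_minnormal_or_conj h n k b :
    h \in H -> n \in N -> k \in H -> b \in N -> <<[set h; k]>> = H ->
  <<[set h * n; k * b]>> = G \/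
  exists2 m, m \in N & (h * n \in H :^ m) && (k * b \in H :^ m).
Proof.
move=> Hh Nn Hk Nb genH; set X := generated_group [set h * n; k * b].
have XX x : x \in [set h * n; k * b] -> x \in X by move=> Sx; rewrite mem_gen.
have sXG : X \subset G.
  by rewrite gen_subG subUset !sub1set !mem_mul_maximal_minnormal.
have nNX : X \subset 'N(N) := subset_trans sXG nNG.
have defG : N * X = G.
  apply/eqP; rewrite eqEsubset (mul_subG sNG sXG) /= -(norm_joinEr nNX).
  rewrite -mul_minnormal_maximal mul_subG ?joing_subl // -genH gen_subG subUset !sub1set.
  have XJ x : x \in [set h * n; k * b] -> x \in N <*> X.
    by move=> Sx; rewrite (subsetP (joing_subr N X)) ?XX.
  have NJ x : x \in N -> x \in N <*> X by apply: (subsetP (joing_subl N X)).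
  rewrite -(mulgK n h) -(mulgK b k).
  rewrite (groupMr _ (NJ _ (groupVr Nn))) (groupMr _ (NJ _ (groupVr Nb))).
  by apply/andP; split; apply: XJ; rewrite !inE eqxx ?orbT.
case: (supplement_minnormal_TI_or_sub defG) => [tiXN | sNX].
  right; have [m Nm defX] := compl_minnormal_conj tiXN defG.
  by exists m; rewrite // -defX !XX // !inE eqxx ?orbT.
by left; apply/eqP; rewrite eqEsubset sXG -defG mul_subG.
Qed.

Lemma exists_gen_mul_minnormal h n k :
    h \in H -> h != 1 -> n \in N -> k \in H -> <<[set h; k]>> = H ->
  exists2 b, b \in N & <<[set h * n; k * b]>> = G.
Proof.
move=> Hh nth Nn Hk genH.
have [/exists_inP[b Nb /eqP] | noGen] := boolP [exists b in N, <<[set h * n; k * b]>> == G].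
  by exists b.
pose f b := odflt 1 [pick m in N | (h * n \in H :^ m) && (k * b \in H :^ m)].
have fP b : b \in N -> [/\ f b \in N, h * n \in H :^ f b & k * b \in H :^ f b].
  move=> Nb; rewrite /f; case: pickP => [m /and3P[] // | noConj].
  case: (gen_mul_minnormal_or_conj Hh Nn Hk Nb genH) => [genG | [m Nm]].
    by case/exists_inP: noGen; exists b; rewrite ?genG.
  by move=> conj_m; move: (noConj m); rewrite /= Nm conj_m.
have finj : {in N &, injective f}.
  move=> b c Nb Nc fbc; have [Nfb _ kb] := fP b Nb; have [_ _ kc] := fP c Nc.
  by apply: (conj_maximal_mulr_inj Nfb Nb Nc kb); rewrite fbc.
have := card_conj_maximal_mul_lt Hh nth Nn; rewrite ltnNge => /negP[].
rewrite -(card_in_imset finj) subset_leq_card //.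
by apply/subsetP=> _ /imsetP[b Nb ->]; have [Nfb hn _] := fP b Nb; rewrite inE Nfb.
Qed.

End PrimitiveAbelianSocle.

Lemma soc_unique_minnormal (gT : finGroupType) (G N : {group gT}) :
    minnormal_sub N G ->
    (forall M : {group gT}, minnormal_sub M G -> M = N) ->
  soc G = N.
Proof.
move=> minN uniqN; rewrite /soc -[RHS]genGid; congr <<_>>.
apply/eqP; rewrite eqEsubset (bigcup_sup N minN) andbT.
by apply/bigcupsP=> M /uniqN ->.
Qed.

Theorem proposition2p2 (gT : finGroupType) (G H : {group gT}) :
  solvable G -> primitive_monolithic G ->
  maximal H G -> core_free H G ->
  forall h n : gT, h \in H -> h != 1 -> n \in soc G ->
  (h * n \in Vgen G) = (h \in Vgen H).
Proof.
move=> solG [_ [N [minN_G uniqN]]] maxH /andP[_ /eqP cfH] h n Hh nth.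
rewrite (soc_unique_minnormal minN_G uniqN) => Nn.
have /andP[minN sNG] := minN_G.
have [_ _ /is_abelemP[p _ /abelem_abelian abN]] := minnormal_solvable minN sNG solG.
have GH := subsetP (proper_sub (maxgroupp maxH)); have GN := subsetP sNG.
rewrite /Vgen !inE Hh (groupM (GH h Hh) (GN n Nn)) /=.
apply/exists_inP/exists_inP=> [[y Gy /eqP genG] | [k Hk /eqP genH]].
  have [z Hz genH] := gen_maximal_of_gen_mul minN sNG abN maxH cfH Hh Nn Gy genG.
  by exists z; rewrite ?genH.
have [b Nb genG] := exists_gen_mul_minnormal minN sNG abN maxH cfH solG Hh nth Nn Hk genH.
by exists (k * b); rewrite ?genG ?(groupM (GH k Hk) (GN b Nb)).
Qed.
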